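(* Let $p\equiv 3\pmod 4$ be a prime. Then $$\prod_{1\le i<j\le \frac{p-1}{2}}(j^2-i^2)\equiv 1\pmod p.$$ *)

From mathcomp Require Import all_boot.

From mathcomp Require Import all_boot all_algebra.
From mathcomp Require Import zify ring.
Import GRing.Theory.

(* Factoring j^2 - i^2 = (j - i)(j + i) telescopes the double product P into
   P * n! = prod_(1 <= j <= n) (2j - 1)!, where n = (p - 1)/2.  Wilson's
   theorem gives k! (p - 1 - k)! = (-1)^(k+1) mod p, so the factors for j and
   n + 1 - j multiply to 1; as n is odd, only the middle factor, with
   2j = n + 1, survives, and it is n!.  Hence P * n! = n! mod p, and n! is
   invertible mod p. *)

Lemma prod_nat_sub_fact m : \prod_(1 <= i < m) (m - i) = m.-1`!.
Proof.
case: m => [|m]; first by rewrite big_geq.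
rewrite big_nat_rev /= fact_prod.
by apply: eq_big_nat => i /andP [i_ge1 i_lt]; lia.
Qed.

Lemma prod_nat_add_fact m : \prod_(1 <= i < m) (m + i) * m`! = (2 * m).-1`!.
Proof.
case: m => [|m]; first by rewrite big_geq.
rewrite [RHS]fact_prod (_ : (2 * m.+1).-1.+1 = m.+2 + m); last by lia.
rewrite [RHS](big_cat_nat (n := m.+2)) ?leq_addr // -fact_prod mulnC.
congr (_ * _); rewrite -{1}[m.+2]add1n big_addn (_ : m.+2 + m - m.+1 = m.+1) //.
  by apply: eq_bigr => i _; rewrite addnC.
by rewrite addSnnS addKn.
Qed.

Lemma prod_sqr_sub_mul m : 0 < m ->
  \prod_(1 <= i < m) (m ^ 2 - i ^ 2) * m = (2 * m).-1`!.
Proof.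
case: m => [//|m] _.
under eq_bigr => i _ do rewrite subn_sqr.
rewrite big_split prod_nat_sub_fact -prod_nat_add_fact factS /=.
by rewrite mulnC mulnA mulnC.
Qed.

Lemma prod_sqr_sub_mul_fact n :
  \prod_(1 <= j < n.+1) \prod_(1 <= i < j) (j ^ 2 - i ^ 2) * n`!
  = \prod_(1 <= j < n.+1) (2 * j).-1`!.
Proof.
elim: n => [|n IHn]; first by rewrite !big_geq.
rewrite big_nat_recr // [RHS]big_nat_recr // -IHn -prod_sqr_sub_mul // factS /=.
set A := \prod_(1 <= j < n.+1) _; set B := \prod_(1 <= i < n.+1) _.
by rewrite -!mulnA; congr (_ * _); rewrite mulnA mulnC.
Qed.

Section FactorialsModPrime.

Context {p : nat} (p_pr : prime p).
Local Open Scope ring_scope.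

Lemma Wilson_Fp : (p.-1)`!%:R = -1 :> 'F_p.
Proof.
have := Wilson (prime_gt1 p_pr); rewrite p_pr => /esym/eqP dvd_p.
by apply/eqP; rewrite -addr_eq0 natr1 -Fp_nat_mod // dvd_p.
Qed.

Lemma fact_mul_fact_subn_Fp k : (k < p)%N ->
  k`!%:R * (p.-1 - k)`!%:R = (-1) ^+ k.+1 :> 'F_p.
Proof.
elim: k => [_ | k IHk lt_k1p]; first by rewrite mul1r subn0 expr1 Wilson_Fp.
have sub_eq : (p.-1 - k = (p.-1 - k.+1).+1)%N by lia.
have opp_eq : (p.-1 - k.+1).+1%:R = - k.+1%:R :> 'F_p.
  apply/eqP; rewrite -addr_eq0 -natrD (_ : (_ + _ = p)%N) ?pchar_Fp_0 //; lia.
rewrite exprS -IHk ?(ltnW lt_k1p) // sub_eq !factS !natrM opp_eq.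
ring.
Qed.

Context {n : nat} (p_eq : p = n.*2.+1).

Lemma fact_mul_fact_pair_Fp j : (0 < j <= n)%N ->
  ((2 * j).-1)`!%:R * ((2 * (n.+1 - j)).-1)`!%:R = 1 :> 'F_p.
Proof.
move=> j_range; have := @fact_mul_fact_subn_Fp (2 * j).-1 ltac:(lia).
rewrite (_ : (p.-1 - _ = (2 * (n.+1 - j)).-1)%N); last by lia.
rewrite (_ : ((2 * j).-1.+1 = 2 * j)%N); last by lia.
by rewrite exprM sqrrN !expr1n.
Qed.

Lemma prod_odd_fact_Fp : odd n ->
  \prod_(1 <= j < n.+1) ((2 * j).-1)`!%:R = n`!%:R :> 'F_p.
Proof.
move=> n_odd; pose f j := ((2 * j).-1)`!%:R : 'F_p.
change (\prod_(1 <= j < n.+1) f j = n`!%:R).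
have n_eq : n = n./2.*2.+1 by rewrite -[LHS]odd_double_half n_odd.
set q := n./2 in n_eq.
have upper : \prod_(q.+2 <= j < n.+1) f j = \prod_(1 <= j < q.+1) f (n.+1 - j)%N.
  rewrite -[q.+2]add1n big_addn [RHS]big_nat_rev (_ : (n.+1 - q.+1 = q.+1)%N); last by lia.
  by apply: eq_big_nat => j j_range; congr f; lia.
rewrite (big_cat_nat (n := q.+1)) ?(big_ltn (m := q.+1)) //=; try lia.
have pairs : \prod_(1 <= j < q.+1) (f j * f (n.+1 - j)%N) = 1.
  rewrite big_nat_cond big1 // => j /andP [/andP [j_ge1 j_lt] _].
  by apply: fact_mul_fact_pair_Fp; lia.
rewrite upper mulrCA -big_split pairs mulr1 /f.
by congr (_`!%:R); lia.
Qed.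

End FactorialsModPrime.

Theorem mainTheorem6 (p : nat) (hp : prime p) (h3 : p %% 4 = 3) :
  \prod_(1 <= j < (p.-1)./2.+1) \prod_(1 <= i < j) (j ^ 2 - i ^ 2) = 1 %[mod p].
Proof.
set n := (p.-1)./2; set P := \prod_(1 <= j < n.+1) _.
have n_odd : odd n by rewrite /n; lia.
have p_eq : p = n.*2.+1 by rewrite /n; lia.
have P_Fp : (P%:R = 1 :> 'F_p)%R.
  have := fact_mul_fact_subn_Fp hp n ltac:(lia).
  rewrite -signr_odd /= n_odd /= expr0 => fact_inv.
  have P_fact : (P%:R * n`!%:R = n`!%:R :> 'F_p)%R.
    by rewrite -natrM prod_sqr_sub_mul_fact natr_prod (prod_odd_fact_Fp hp p_eq).
  move/(congr1 ( *%R^~ (p.-1 - n)`!%:R)%R): P_fact.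
  by rewrite /= -mulrA fact_inv mulr1.
move/(congr1 (@nat_of_ord _)): P_Fp; rewrite val_Fp_nat // => ->.
exact: val_Fp_nat hp 1.
Qed.
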